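(* The following two assertions are equivalent. (i) (Gleason's theorem for $\mathbb{R}^3$.) For every state $P$ on $\mathbb{R}^3$ there is a symmetric positive semidefinite real $3\times 3$ matrix $W$ with trace $1$ such that $P(x)=\langle \vec{x},W\vec{x}\rangle$ for every atom $x$ of $L(\mathbb{R}^3)$, where $\vec{x}$ is a unit vector along $x$. (ii) Every bounded frame function $f$ on the set of all atoms of $L(\mathbb{R}^3)$ which satisfies $f(e_i)=0$ for $1\le i\le 3$ and $f(b_{ij})=0$ for $1\le i<j\le 3$ is identically zero.
   Context: $L(\mathbb{R}^3)$ denotes the lattice of subspaces of $\mathbb{R}^3$ (with its standard inner product); its atoms are the one-dimensional subspaces (rays). For an atom $x$, $\vec{x}$ denotes a unit vector spanning $x$. A frame function on a set $\Gamma$ of atoms of $L(\mathbb{R}^3)$ is a real function $f$ on $\Gamma$ for which there is a constant $C$ such that $f(x)+f(x')+f(x'')=C$ for every triple $x,x',x''$ of pairwise orthogonal atoms in $\Gamma$. A state on $\mathbb{R}^3$ is a function $P$ from the atoms of $L(\mathbb{R}^3)$ to $[0,\infty)$ such that $P(x)+P(x')+P(x'')=1$ for every triple of pairwise orthogonal atoms. Let $\vec{e_1}=(1,0,0)$, $\vec{e_2}=(0,1,0)$, $\vec{e_3}=(0,0,1)$ and $\vec{b_{ij}}=\frac{1}{\sqrt{2}}(\vec{e_i}+\vec{e_j})$ for $1\le i<j\le 3$. Let $e_i$ and $b_{ij}$ denote the rays spanned by these vectors. *)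

From HB Require Import structures.
From mathcomp Require Import all_boot all_order all_algebra.
From mathcomp Require Import reals.
Set Implicit Arguments. Unset Strict Implicit. Unset Printing Implicit Defensive.
Import Order.TTheory GRing.Theory Num.Theory.
Local Open Scope ring_scope.

Section Defs.
Variable R : realType.

Definition vec3 := 'rV[R]_3.

Definition dot3 (u v : vec3) : R := (u *m v^T) 0 0.

Definition atom (x : {vspace vec3}) : Prop := \dim x = 1%N.

Definition orth (x y : {vspace vec3}) : Prop :=
  forall u v, u \in x -> v \in y -> dot3 u v = 0.

Definition orth_triple (x y z : {vspace vec3}) : Prop :=
  [/\ atom x, atom y, atom z & [/\ orth x y, orth x z & orth y z]].

Definition state (P : {vspace vec3} -> R) : Prop :=
  (forall x, atom x -> 0 <= P x) /\
  (forall x y z, orth_triple x y z -> P x + P y + P z = 1).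

Definition frame_function (f : {vspace vec3} -> R) : Prop :=
  exists C : R, forall x y z, orth_triple x y z -> f x + f y + f z = C.

Definition bounded_on_atoms (f : {vspace vec3} -> R) : Prop :=
  exists M : R, forall x, atom x -> `|f x| <= M.

Definition evec (i : 'I_3) : vec3 := \row_(j < 3) (i == j)%:R.
Definition e_ray (i : 'I_3) : {vspace vec3} := <[evec i]>%VS.
(* b_ij is spanned by (e_i + e_j)/sqrt 2; the span does not depend on the scalar *)
Definition b_ray (i j : 'I_3) : {vspace vec3} := <[evec i + evec j]>%VS.

Definition Gleason3 : Prop :=
  forall P, state P ->
  exists W : 'M[R]_3,
    [/\ W^T = W,
        (forall v : vec3, 0 <= dot3 v (v *m W^T)),
        \tr W = 1 &
        forall x, atom x -> forall v : vec3, v \in x -> dot3 v v = 1 ->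
          P x = dot3 v (v *m W^T)].

Definition FrameZero : Prop :=
  forall f, frame_function f -> bounded_on_atoms f ->
    (forall i, f (e_ray i) = 0) ->
    (forall i j : 'I_3, (i < j)%N -> f (b_ray i j) = 0) ->
    forall x, atom x -> f x = 0.

End Defs.

(* (ii) => (i): for a state P let W be the symmetric matrix with W_ii = P(e_i) and
   W_ij = P(b_ij) - (P(e_i) + P(e_j))/2, the unique one whose Rayleigh quotient agrees
   with P on the six rays e_i, b_ij.  Since the trace is the sum of the Rayleigh
   quotients over any orthogonal frame, P minus the Rayleigh quotient of W is a
   bounded frame function vanishing on these rays, hence zero.
   (i) => (ii): a bounded frame function f vanishing on the e_i has frame constant 0,
   so (f + m)/(3m) is a state for m large.  Its Gleason matrix has diagonal 1/3 and,
   by the zeros on the b_ij, antisymmetric off-diagonal part; its quadratic form is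
   then |v|^2/3, which forces f = 0. *)
From HB Require Import structures.
From mathcomp Require Import all_boot all_order all_algebra.
From mathcomp Require Import reals.
From mathcomp Require Import ring lra.
Set Implicit Arguments. Unset Strict Implicit. Unset Printing Implicit Defensive.
Import Order.TTheory GRing.Theory Num.Theory.
Local Open Scope ring_scope.

Notation i0 := (@ord0 2).
Notation i1 := (@lift 3 ord0 (@ord0 1)).
Notation i2 := (@lift 3 ord0 (@lift 2 ord0 (@ord0 0))).

Lemma ord3P (j : 'I_3) : [\/ j = i0, j = i1 | j = i2].
Proof.
case: j => [[|[|[|k]]] Hj]; [apply: Or31|apply: Or32|apply: Or33|by []];
  by apply/val_inj.
Qed.

Section Gleason.
Variable R : realType.
Implicit Types (u v : vec3 R) (W : 'M[R]_3) (x y z : {vspace vec3 R}).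

Lemma dot3E u v : dot3 u v = u 0 i0 * v 0 i0 + u 0 i1 * v 0 i1 + u 0 i2 * v 0 i2.
Proof. by rewrite /dot3 mxE !big_ord_recl big_ord0 !mxE addr0 addrA. Qed.

Lemma dot3C u v : dot3 u v = dot3 v u.
Proof. by rewrite !dot3E; ring. Qed.

Lemma dot3Zl a u v : dot3 (a *: u) v = a * dot3 u v.
Proof. by rewrite !dot3E !mxE; ring. Qed.

Lemma dot3Zr a u v : dot3 u (a *: v) = a * dot3 u v.
Proof. by rewrite dot3C dot3Zl dot3C. Qed.

Lemma dot3_ge0 v : 0 <= dot3 v v.
Proof. by rewrite dot3E; nra. Qed.

Lemma dot3_eq0 v : (dot3 v v == 0) = (v == 0).
Proof.
apply/eqP/eqP => [|->]; last by rewrite dot3E !mxE !mulr0 !addr0.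
rewrite dot3E => v0; apply/matrixP => i j; rewrite (ord1 i) mxE.
by case: (ord3P j) => ->; nra.
Qed.

Lemma dot3_gt0 v : (0 < dot3 v v) = (v != 0).
Proof. by rewrite lt_def dot3_ge0 andbT dot3_eq0. Qed.

Definition mk3 (a b c : R) : vec3 R := \row_(j < 3) nth 0 [:: a; b; c] j.

Lemma dot3_mk3 a b c u : dot3 (mk3 a b c) u = a * u 0 i0 + b * u 0 i1 + c * u 0 i2.
Proof. by rewrite dot3E !mxE. Qed.

(* The third vector is the cross product v x q, whose squared length is given by
   Lagrange's identity. *)
Lemma orthogonal_completion v : v != 0 -> exists q r,
  [/\ q != 0, r != 0, dot3 v q = 0, dot3 v r = 0 & dot3 q r = 0].
Proof.
rewrite -dot3_gt0 => v_gt0.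
set a := v 0 i0; set b := v 0 i1; set c := v 0 i2.
have abc_gt0 : 0 < a ^+ 2 + b ^+ 2 + c ^+ 2 by move: v_gt0; rewrite dot3E -/a -/b -/c; nra.
have [q [q_gt0 vq]] : exists q, 0 < dot3 q q /\ dot3 v q = 0.
  have [ab_gt0|ab_le0] := boolP (0 < a ^+ 2 + b ^+ 2).
    exists (mk3 (- b) a 0); rewrite dot3_mk3 dot3C dot3_mk3 !mxE /= -/a -/b -/c.
    by split; nra.
  exists (mk3 0 (- c) b); rewrite dot3_mk3 dot3C dot3_mk3 !mxE /= -/a -/b -/c.
  by split; nra.
set q0 := q 0 i0; set q1 := q 0 i1; set q2 := q 0 i2.
pose r := mk3 (b * q2 - c * q1) (c * q0 - a * q2) (a * q1 - b * q0).
have lagrange : dot3 r r = dot3 v v * dot3 q q - dot3 v q ^+ 2.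
  by rewrite dot3_mk3 !dot3E !mxE /= -/a -/b -/c -/q0 -/q1 -/q2; ring.
exists q, r; split; rewrite -?dot3_gt0 //.
- by rewrite lagrange vq expr0n subr0 mulr_gt0.
- by rewrite dot3C dot3_mk3 -/a -/b -/c; ring.
- by rewrite dot3C dot3_mk3 -/q0 -/q1 -/q2; ring.
Qed.

Lemma atom_vpick x : atom x -> vpick x != 0 /\ x = <[vpick x]>%VS.
Proof.
rewrite /atom => dimx.
have vx : vpick x != 0 by rewrite vpick0 -dimv_eq0 dimx.
split => //; apply/eqP; rewrite eq_sym eqEdim -memvE memv_pick.
by rewrite dim_vline vx dimx.
Qed.

Lemma atom_vline v : v != 0 -> atom <[v]>%VS.
Proof. by rewrite /atom dim_vline => ->. Qed.

Lemma orth_vline u v : dot3 u v = 0 -> orth <[u]>%VS <[v]>%VS.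
Proof. by move=> uv _ _ /vlineP[a ->] /vlineP[b ->]; rewrite dot3Zl dot3Zr uv !mulr0. Qed.

Lemma orth_vpick x y : orth x y -> dot3 (vpick x) (vpick y) = 0.
Proof. by apply; apply: memv_pick. Qed.

Lemma unit_in_atom x : atom x -> exists2 v, v \in x & dot3 v v = 1.
Proof.
case/atom_vpick; rewrite -dot3_gt0 => p_gt0 _.
exists ((Num.sqrt (dot3 (vpick x) (vpick x)))^-1 *: vpick x).
  exact/memvZ/memv_pick.
by rewrite dot3Zl dot3Zr mulrA -expr2 exprVn sqr_sqrtr ?ltW // mulVf ?gt_eqF.
Qed.

Lemma evecE (i j : 'I_3) : evec R i 0 j = (i == j)%:R.
Proof. by rewrite mxE. Qed.

Lemma dot3_evec (i j : 'I_3) : dot3 (evec R i) (evec R j) = (i == j)%:R.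
Proof.
rewrite dot3E !evecE.
by case: (ord3P i) => ->; case: (ord3P j) => -> /=; rewrite ?mulr0 ?mul0r ?mulr1 ?addr0 ?add0r.
Qed.

Lemma evec_neq0 i : evec R i != 0.
Proof. by rewrite -dot3_eq0 dot3_evec eqxx oner_neq0. Qed.

Lemma dot3_bvec (i j : 'I_3) : (i < j)%N ->
  dot3 (evec R i + evec R j) (evec R i + evec R j) = 2.
Proof.
rewrite dot3E !mxE.
by case: (ord3P i) => ->; case: (ord3P j) => -> //= _; ring.
Qed.

Lemma bvec_neq0 (i j : 'I_3) : (i < j)%N -> evec R i + evec R j != 0.
Proof. by move=> ij; rewrite -dot3_eq0 dot3_bvec // pnatr_eq0. Qed.

Lemma orth_triple_e : orth_triple (e_ray R i0) (e_ray R i1) (e_ray R i2).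
Proof.
by split; [apply/atom_vline/evec_neq0 ..| split; apply: orth_vline; rewrite dot3_evec].
Qed.

Definition qf W v := dot3 v (v *m W^T).

Lemma qfZ W a v : qf W (a *: v) = a ^+ 2 * qf W v.
Proof. by rewrite /qf -scalemxAl dot3Zl dot3Zr mulrA expr2. Qed.

Lemma qfE W v : qf W v = \sum_l \sum_m v 0 l * v 0 m * W l m.
Proof.
rewrite /qf /dot3 mxE; apply: eq_bigr => l _; rewrite !mxE mulr_sumr.
by apply: eq_bigr => m _; rewrite !mxE mulrA.
Qed.

Lemma qfE3 W v : qf W v =
  v 0 i0 * v 0 i0 * W i0 i0 + v 0 i0 * v 0 i1 * W i0 i1 + v 0 i0 * v 0 i2 * W i0 i2 +
  v 0 i1 * v 0 i0 * W i1 i0 + v 0 i1 * v 0 i1 * W i1 i1 + v 0 i1 * v 0 i2 * W i1 i2 +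
  v 0 i2 * v 0 i0 * W i2 i0 + v 0 i2 * v 0 i1 * W i2 i1 + v 0 i2 * v 0 i2 * W i2 i2.
Proof. by rewrite qfE !big_ord_recl !big_ord0 /=; ring. Qed.

Lemma qf_evec W i : qf W (evec R i) = W i i.
Proof.
rewrite qfE3 !evecE.
by case: (ord3P i) => -> /=; rewrite ?mulr0 ?mul0r ?mulr1 ?addr0 ?add0r ?mul1r.
Qed.

Lemma qf_bvec W (i j : 'I_3) : (i < j)%N ->
  qf W (evec R i + evec R j) = W i i + W j j + W i j + W j i.
Proof.
rewrite qfE3 !mxE.
by case: (ord3P i) => ->; case: (ord3P j) => -> //= _; ring.
Qed.

Lemma qf_isotropic W c :
  (forall i, W i i = c) -> (forall i j : 'I_3, (i < j)%N -> W i j + W j i = 0) ->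
  forall v, qf W v = c * dot3 v v.
Proof.
move=> Wd Wo v; have Wo' (i j : 'I_3) : (i < j)%N -> W j i = - W i j.
  by move=> /Wo ij; apply/eqP; rewrite -addr_eq0 addrC ij.
by rewrite qfE3 dot3E !Wd (Wo' i0 i1) // (Wo' i0 i2) // (Wo' i1 i2) //; ring.
Qed.

(* Rows of U are an orthogonal frame; rows of D are the same vectors divided by their
   squared lengths, so D U^T = 1 and tr W = tr (W U^T D) = tr (D W U^T). *)
Lemma mxtrace_orthogonal W (p : 'I_3 -> vec3 R) :
  (forall i, p i != 0) -> (forall i j, i != j -> dot3 (p i) (p j) = 0) ->
  \sum_i qf W (p i) / dot3 (p i) (p i) = \tr W.
Proof.
move=> p_neq0 p_orth.
pose U : 'M[R]_3 := \matrix_(i, j) p i 0 j.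
pose D : 'M[R]_3 := \matrix_(i, j) (p i 0 j / dot3 (p i) (p i)).
have DU : D *m U^T = 1%:M.
  apply/matrixP => i j; rewrite !mxE.
  transitivity (dot3 (p i) (p j) / dot3 (p i) (p i)).
    by rewrite [dot3 _ (p j)]/dot3 mxE mulr_suml; apply: eq_bigr => l _; rewrite !mxE; ring.
  case: eqP => [->|/eqP ij]; last by rewrite p_orth // mul0r.
  by rewrite mulfV // gt_eqF // dot3_gt0.
rewrite -[in RHS](mulmx1 W) -(mulmx1C DU) mulmxA mxtrace_mulC /mxtrace.
apply: eq_bigr => i _; rewrite !mxE /qf [dot3 (p i) _]/dot3 mxE mulr_suml.
apply: eq_bigr => l _; rewrite !mxE !mulr_sumr mulr_suml.
by apply: eq_bigr => m _; rewrite !mxE; ring.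
Qed.

(* Equal to 0 at v = 0, since x / 0 = 0. *)
Definition rayleigh W v := qf W v / dot3 v v.

Lemma rayleighZ W k v : k != 0 -> rayleigh W (k *: v) = rayleigh W v.
Proof.
move=> k0; rewrite /rayleigh qfZ dot3Zl dot3Zr mulrA -expr2.
by rewrite invfM mulrACA mulfV ?mul1r // expf_neq0.
Qed.

Lemma rayleigh_atom W x v : atom x -> v \in x -> v != 0 ->
  rayleigh W v = rayleigh W (vpick x).
Proof.
case/atom_vpick => _ ex; rewrite {1}ex => /vlineP[k ->].
by rewrite scaler_eq0 negb_or => /andP[k0 _]; rewrite rayleighZ.
Qed.

Lemma rayleigh_vline W v : v != 0 -> rayleigh W (vpick <[v]>%VS) = rayleigh W v.
Proof.
by move=> v0; rewrite (rayleigh_atom W (atom_vline v0) (memv_line v)).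
Qed.

Lemma rayleigh_unit W v : dot3 v v = 1 -> rayleigh W v = qf W v.
Proof. by rewrite /rayleigh => ->; rewrite invr1 mulr1. Qed.

Lemma rayleigh_evec W i : rayleigh W (evec R i) = W i i.
Proof. by rewrite rayleigh_unit ?qf_evec // dot3_evec eqxx. Qed.

Lemma rayleigh_bvec W (i j : 'I_3) : (i < j)%N ->
  rayleigh W (evec R i + evec R j) = (W i i + W j j + W i j + W j i) / 2.
Proof. by move=> ij; rewrite /rayleigh qf_bvec // dot3_bvec. Qed.

Lemma norm_coord_mul_le v l m : `|v 0 l * v 0 m| <= dot3 v v.
Proof.
have sqr_le k : v 0 k ^+ 2 <= dot3 v v by rewrite dot3E; case: (ord3P k) => ->; nra.
have := sqr_le l; have := sqr_le m; rewrite ler_norml => hl hm.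
by apply/andP; split; nra.
Qed.

Lemma norm_qf_le W v : `|qf W v| <= (\sum_l \sum_m `|W l m|) * dot3 v v.
Proof.
rewrite qfE mulr_suml; apply: (le_trans (ler_norm_sum _ _ _)); apply: ler_sum => l _.
rewrite mulr_suml; apply: (le_trans (ler_norm_sum _ _ _)); apply: ler_sum => m _.
by rewrite normrM mulrC ler_wpM2l ?norm_coord_mul_le.
Qed.

Lemma norm_rayleigh_le W v : `|rayleigh W v| <= \sum_l \sum_m `|W l m|.
Proof.
have [->|v0] := eqVneq v 0.
  rewrite /rayleigh; have /eqP -> : dot3 (0 : vec3 R) 0 == 0 by rewrite dot3_eq0.
  by rewrite invr0 mulr0 normr0 sumr_ge0 // => l _; rewrite sumr_ge0.
have d_gt0 : 0 < dot3 v v by rewrite dot3_gt0.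
by rewrite normrM normfV (gtr0_norm d_gt0) ler_pdivrMr // norm_qf_le.
Qed.

Lemma rayleigh_gleason W (P : {vspace vec3 R} -> R) :
  (forall x, atom x -> forall v, v \in x -> dot3 v v = 1 -> P x = qf W v) ->
  forall x v, atom x -> v \in x -> v != 0 -> P x = rayleigh W v.
Proof.
move=> PW x v ax vx v0; have [u ux u1] := unit_in_atom ax.
rewrite (PW _ ax _ ux u1) -rayleigh_unit // (rayleigh_atom W ax ux).
  by rewrite (rayleigh_atom W ax vx).
by rewrite -dot3_eq0 u1 oner_neq0.
Qed.

Section StateMatrix.
Variable P : {vspace vec3 R} -> R.
Hypothesis P_state : state P.

Lemma state_le1 x : atom x -> P x <= 1.
Proof.
case/atom_vpick => p0 ->; have [q [r [q0 r0 pq pr qr]]] := orthogonal_completion p0.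
have := P_state.2 _ _ _ (And4 (atom_vline p0) (atom_vline q0) (atom_vline r0)
  (And3 (orth_vline pq) (orth_vline pr) (orth_vline qr))).
have := P_state.1 _ (atom_vline q0); have := P_state.1 _ (atom_vline r0); lra.
Qed.

Definition gleason_matrix : 'M[R]_3 := \matrix_(i, j)
  if i == j then P (e_ray R i) else P (b_ray R i j) - (P (e_ray R i) + P (e_ray R j)) / 2.

Lemma gleason_matrix_sym : gleason_matrix^T = gleason_matrix.
Proof.
apply/matrixP => i j; rewrite !mxE eq_sym; case: eqP => [->|_] //.
by rewrite /b_ray [evec R j + _]addrC [P (e_ray R j) + _]addrC.
Qed.

Lemma mxtrace_gleason_matrix : \tr gleason_matrix = 1.
Proof.
rewrite /mxtrace !big_ord_recl big_ord0 !mxE /= addr0 addrA.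
exact: P_state.2 _ _ _ orth_triple_e.
Qed.

Definition gleason_defect x := P x - rayleigh gleason_matrix (vpick x).

Lemma gleason_defect_frame x y z : orth_triple x y z ->
  gleason_defect x + gleason_defect y + gleason_defect z = 0.
Proof.
move=> xyz; case: (xyz) => ax ay az [oxy oxz oyz].
pose p (i : 'I_3) := nth 0 [:: vpick x; vpick y; vpick z] i.
have p_neq0 i : p i != 0.
  by case: (ord3P i) => ->; [case/atom_vpick: ax|case/atom_vpick: ay|case/atom_vpick: az].
have p_orth i j : i != j -> dot3 (p i) (p j) = 0.
  case: (ord3P i) => ->; case: (ord3P j) => -> //= _;
  by [exact: orth_vpick | rewrite dot3C; exact: orth_vpick].
have := mxtrace_orthogonal gleason_matrix p_neq0 p_orth.
rewrite mxtrace_gleason_matrix !big_ord_recl big_ord0 /= addr0 => tr1.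
have := P_state.2 _ _ _ xyz; rewrite /gleason_defect /rayleigh; lra.
Qed.

Lemma gleason_defect_bounded : bounded_on_atoms gleason_defect.
Proof.
exists (1 + \sum_l \sum_m `|gleason_matrix l m|) => x ax.
have := norm_rayleigh_le gleason_matrix (vpick x); rewrite /gleason_defect !ler_norml.
have := P_state.1 _ ax; have := state_le1 ax => P_le1 P_ge0 /andP[lo hi].
by apply/andP; split; lra.
Qed.

Lemma gleason_defect_e i : gleason_defect (e_ray R i) = 0.
Proof.
by rewrite /gleason_defect rayleigh_vline ?evec_neq0 // rayleigh_evec mxE eqxx subrr.
Qed.

Lemma gleason_defect_b (i j : 'I_3) : (i < j)%N -> gleason_defect (b_ray R i j) = 0.
Proof.
move=> ij; have /negPf ji : i != j by apply: contraTneq ij => ->; rewrite ltnn.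
rewrite /gleason_defect rayleigh_vline ?bvec_neq0 // rayleigh_bvec // !mxE !eqxx ji.
by rewrite eq_sym ji /b_ray [evec R j + _]addrC [P (e_ray R j) + _]addrC; lra.
Qed.

End StateMatrix.

Lemma FrameZero_Gleason3 : FrameZero R -> Gleason3 R.
Proof.
move=> FZ P P_state; set W := gleason_matrix P.
have PE x : atom x -> P x = rayleigh W (vpick x).
  move=> ax; apply/eqP; rewrite -subr_eq0; apply/eqP.
  apply: (FZ _ _ (gleason_defect_bounded P_state) (gleason_defect_e P)
    (gleason_defect_b P)) => //.
  by exists 0; apply: gleason_defect_frame.
exists W; split.
- exact: gleason_matrix_sym.
- move=> v; have [->|v0] := eqVneq v 0; first by rewrite dot3E !mxE !mul0r !addr0.
  have av := atom_vline v0; have := P_state.1 _ av.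
  by rewrite PE // rayleigh_vline // /rayleigh pmulr_lge0 // invr_gt0 dot3_gt0.
- exact: (mxtrace_gleason_matrix P_state).
- move=> x ax v vx v1; rewrite PE // -(rayleigh_atom W ax vx) ?rayleigh_unit //.
  by rewrite -dot3_eq0 v1 oner_neq0.
Qed.

Lemma bounded_on_atoms_below f : bounded_on_atoms f ->
  exists2 m, 0 < m & forall x, atom x -> - m <= f x.
Proof.
case=> M fM; exists (`|M| + 1) => [|x ax]; first by rewrite ltr_wpDl.
have := fM _ ax; rewrite ler_norml => /andP[lo _]; have := ler_norm M; lra.
Qed.

Lemma state_frame0 f m : 0 < m -> (forall x, atom x -> - m <= f x) ->
  (forall x y z, orth_triple x y z -> f x + f y + f z = 0) ->
  state (fun x => f x / (3 * m) + 3^-1).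
Proof.
move=> m_gt0 f_ge f0; split => [x ax | x y z xyz].
  have -> : f x / (3 * m) + 3^-1 = (f x + m) / (3 * m) by field; rewrite gt_eqF.
  by apply: divr_ge0; [have := f_ge _ ax; lra | rewrite mulr_ge0 ?ltW].
transitivity ((f x + f y + f z) / (3 * m) + 1); first by field; rewrite gt_eqF.
by rewrite f0 // mul0r add0r.
Qed.

Lemma Gleason3_FrameZero : Gleason3 R -> FrameZero R.
Proof.
move=> G f [C fC] f_bounded fe fb x ax.
have C0 : C = 0 by rewrite -(fC _ _ _ orth_triple_e) !fe !addr0.
have [m m_gt0 f_ge] := bounded_on_atoms_below f_bounded.
have f0 y1 y2 y3 : orth_triple y1 y2 y3 -> f y1 + f y2 + f y3 = 0 by rewrite -C0; apply: fC.
have [W [_ _ _ WP]] := G _ (state_frame0 m_gt0 f_ge f0).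
have PE := rayleigh_gleason WP.
have Wd i : W i i = 3^-1.
  have := PE _ _ (atom_vline (evec_neq0 i)) (memv_line _) (evec_neq0 i).
  by rewrite fe mul0r add0r rayleigh_evec.
have Wo (i j : 'I_3) : (i < j)%N -> W i j + W j i = 0.
  move=> ij; have := PE _ _ (atom_vline (bvec_neq0 ij)) (memv_line _) (bvec_neq0 ij).
  by rewrite fb // mul0r add0r rayleigh_bvec // !Wd; lra.
have [p0 _] := atom_vpick ax; have := PE _ _ ax (memv_pick x) p0.
rewrite /rayleigh (qf_isotropic Wd Wo) mulfK ?gt_eqF ?dot3_gt0 // => /eqP.
by rewrite -subr_eq0 addrK mulf_eq0 invr_eq0 mulf_eq0 pnatr_eq0 (gt_eqF m_gt0) !orbF => /eqP.
Qed.

End Gleason.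

Theorem mainTheorem1 (R : realType) : Gleason3 R <-> FrameZero R.
Proof. by split; [exact: Gleason3_FrameZero | exact: FrameZero_Gleason3]. Qed.
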